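(* Let $H$ be a super-cocommutative Hopf superalgebra, $\underline H=\Delta^{-1}(H_0\otimes H_0)$ and $V_H=P(H)_1$ the space of odd primitive elements. Then $\underline H$ is a cocommutative Hopf subalgebra, $V_H$ is a right $\underline H$-module via $v\triangleleft a=\sum S(a_{(1)})va_{(2)}$, the map $[u,v]=uv+vu$ takes $V_H\times V_H$ into $P(\underline H)$, and with this bilinear map $(\underline H,V_H)$ is a dual Harish-Chandra pair. This construction is functorial, giving a functor from super-cocommutative Hopf superalgebras to dual Harish-Chandra pairs, $H\mapsto(\underline H,V_H)$.
   Context: $\Bbbk$ is a field with $\operatorname{char}\Bbbk\ne2$. A dual Harish-Chandra pair $(J,V)$: $J$ a cocommutative Hopf algebra, $V$ a right $J$-module, bilinear $[\ ,\ ]:V\times V\to P(J)$ (primitives of $J$) with $\sum[u\triangleleft a_{(1)},v\triangleleft a_{(2)}]=\sum S(a_{(1)})[u,v]a_{(2)}$, $[u,v]=[v,u]$, $v\triangleleft[v,v]=0$. A morphism is $(f,g)$ with $f$ a Hopf algebra map, $g$ linear, $g(v\triangleleft a)=g(v)\triangleleft f(a)$, $f([u,v])=[g(u),g(v)]$. *)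

(* Tensors: an element of W (x) W is represented by a finite list of pairs
   (formal sum of simple tensors).  Two such lists denote the same tensor iff
   they agree under every k-bilinear form W x W -> k (bilinear forms separate
   the points of W (x) W over a field). *)
From HB Require Import structures.
From mathcomp Require Import all_boot all_order all_algebra.
Set Implicit Arguments. Unset Strict Implicit. Unset Printing Implicit Defensive.
Import GRing.Theory.
Local Open Scope ring_scope.

Section Defs.
Variable k : fieldType.

Definition bilinear_form (W : lmodType k) (phi : W -> W -> k) : Prop :=
  (forall a x y z, phi (a *: x + y) z = a * phi x z + phi y z) /\
  (forall a x y z, phi z (a *: x + y) = a * phi z x + phi z y).

Definition tensor_eq (W : lmodType k) (s t : seq (W * W)) : Prop :=
  forall phi, bilinear_form phi ->
    \sum_(p <- s) phi p.1 p.2 = \sum_(p <- t) phi p.1 p.2.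

Definition trilinear_form (W : lmodType k) (phi : W -> W -> W -> k) : Prop :=
  (forall a x y z w, phi (a *: x + y) z w = a * phi x z w + phi y z w) /\
  (forall a x y z w, phi z (a *: x + y) w = a * phi z x w + phi z y w) /\
  (forall a x y z w, phi z w (a *: x + y) = a * phi z w x + phi z w y).

Definition tensor3_eq (W : lmodType k) (s t : seq (W * W * W)) : Prop :=
  forall phi, trilinear_form phi ->
    \sum_(p <- s) phi p.1.1 p.1.2 p.2 = \sum_(p <- t) phi p.1.1 p.1.2 p.2.

(* the tensor lies in A (x) A : it has a representative with entries in A *)
Definition tensor_in (W : lmodType k) (A : W -> Prop) (s : seq (W * W)) :=
  exists2 t, tensor_eq s t & forall p, p \in t -> A p.1 /\ A p.2.

Definition subspace (W : lmodType k) (A : W -> Prop) : Prop :=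
  A 0 /\ forall a x y, A x -> A y -> A (a *: x + y).

Definition subalgebra (W : algType k) (A : W -> Prop) : Prop :=
  subspace A /\ A 1 /\ (forall x y, A x -> A y -> A (x * y)).

(* [tm] is the multiplication of W (x) W used for the compatibility of the
   comultiplication with the product (ordinary or super). *)
Definition flip (W : lmodType k) (s : seq (W * W)) := [seq (p.2, p.1) | p <- s].

Definition tmul (W : algType k) (s t : seq (W * W)) : seq (W * W) :=
  [seq (p.1 * q.1, p.2 * q.2) | p <- s, q <- t].

Definition coalgebra_on (W : algType k) (A : W -> Prop)
    (Delta : W -> seq (W * W)) (eps : W -> k) : Prop :=
  (forall x, A x -> tensor_in A (Delta x)) /\
  (forall a x y, A x -> A y ->
     tensor_eq (Delta (a *: x + y)) ([seq (a *: p.1, p.2) | p <- Delta x] ++ Delta y)) /\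
  (forall a x y, A x -> A y -> eps (a *: x + y) = a * eps x + eps y) /\
  (forall x, A x -> tensor3_eq
     [seq (p.1, q.1, q.2) | p <- Delta x, q <- Delta p.2]
     [seq (q.1, q.2, p.2) | p <- Delta x, q <- Delta p.1]) /\
  (forall x, A x -> \sum_(p <- Delta x) eps p.1 *: p.2 = x) /\
  (forall x, A x -> \sum_(p <- Delta x) eps p.2 *: p.1 = x).

Definition bialgebra_on (W : algType k) (tm : seq (W * W) -> seq (W * W) -> seq (W * W))
    (A : W -> Prop) (Delta : W -> seq (W * W)) (eps : W -> k) : Prop :=
  subalgebra A /\ coalgebra_on A Delta eps /\
  (forall x y, A x -> A y -> tensor_eq (Delta (x * y)) (tm (Delta x) (Delta y))) /\
  tensor_eq (Delta 1) [:: (1, 1)] /\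
  (forall x y, A x -> A y -> eps (x * y) = eps x * eps y) /\
  eps 1 = 1.

Definition hopf_on (W : algType k) (tm : seq (W * W) -> seq (W * W) -> seq (W * W))
    (A : W -> Prop) (Delta : W -> seq (W * W)) (eps : W -> k) (S : W -> W) : Prop :=
  bialgebra_on tm A Delta eps /\
  (forall x, A x -> A (S x)) /\
  (forall a x y, A x -> A y -> S (a *: x + y) = a *: S x + S y) /\
  (forall x, A x -> \sum_(p <- Delta x) S p.1 * p.2 = eps x *: 1) /\
  (forall x, A x -> \sum_(p <- Delta x) p.1 * S p.2 = eps x *: 1).

Definition cocomm_hopf_on (W : algType k) (A : W -> Prop)
    (Delta : W -> seq (W * W)) (eps : W -> k) (S : W -> W) : Prop :=
  hopf_on (@tmul W) A Delta eps S /\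
  (forall x, A x -> tensor_eq (Delta x) (flip (Delta x))).

Definition primitive_on (W : algType k) (A : W -> Prop) (Delta : W -> seq (W * W))
    (x : W) : Prop :=
  A x /\ tensor_eq (Delta x) [:: (x, 1); (1, x)].

(* A Z/2-grading of W: [pr false] and [pr true] are the projections onto
   W_0 and W_1 of the decomposition W = W_0 (+) W_1. *)
Definition grading (W : lmodType k) (pr : bool -> W -> W) : Prop :=
  (forall b a x y, pr b (a *: x + y) = a *: pr b x + pr b y) /\
  (forall b x, pr b (pr b x) = pr b x) /\
  (forall b x, pr b (pr (~~ b) x) = 0) /\
  (forall x, pr false x + pr true x = x).

Definition parities : seq (bool * bool) :=
  [:: (false, false); (false, true); (true, false); (true, true)].

(* product in the super tensor product algebra:
   (a (x) b)(c (x) d) = (-1)^{|b||c|} ac (x) bd *)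
Definition stmul (W : algType k) (pr : bool -> W -> W) (s t : seq (W * W)) :
    seq (W * W) :=
  flatten [seq [seq ((-1) ^+ (ij.1 && ij.2) *: (p.1 * pr ij.2 q.1), pr ij.1 p.2 * q.2)
               | ij <- parities] | p <- s, q <- t].

(* super flip: a (x) b |-> (-1)^{|a||b|} b (x) a *)
Definition sflip (W : lmodType k) (pr : bool -> W -> W) (s : seq (W * W)) :
    seq (W * W) :=
  flatten [seq [seq ((-1) ^+ (ij.1 && ij.2) *: pr ij.2 p.2, pr ij.1 p.1)
               | ij <- parities] | p <- s].

Definition super_hopf (H : algType k) (pr : bool -> H -> H)
    (Delta : H -> seq (H * H)) (eps : H -> k) (S : H -> H) : Prop :=
  grading pr /\
  (forall i j x y, pr (i (+) j) (pr i x * pr j y) = pr i x * pr j y) /\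
  pr false 1 = 1 /\
  hopf_on (stmul pr) (fun _ => True) Delta eps S /\
  (forall i x, tensor_eq (Delta (pr i x))
                 [seq (pr j p.1, pr (i (+) j) p.2) | p <- Delta x, j <- [:: false; true]]) /\
  (forall x, eps (pr true x) = 0) /\
  (forall i x, S (pr i x) = pr i (S x)).

Definition super_cocomm_hopf (H : algType k) (pr : bool -> H -> H)
    (Delta : H -> seq (H * H)) (eps : H -> k) (S : H -> H) : Prop :=
  super_hopf pr Delta eps S /\
  (forall x, tensor_eq (Delta x) (sflip pr (Delta x))).

Definition hopf_morph_on (W W' : algType k) (A : W -> Prop) (A' : W' -> Prop)
    (Delta : W -> seq (W * W)) (Delta' : W' -> seq (W' * W'))
    (eps : W -> k) (eps' : W' -> k) (S : W -> W) (S' : W' -> W') (f : W -> W') : Prop :=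
  (forall x, A x -> A' (f x)) /\
  (forall a x y, A x -> A y -> f (a *: x + y) = a *: f x + f y) /\
  f 1 = 1 /\
  (forall x y, A x -> A y -> f (x * y) = f x * f y) /\
  (forall x, A x -> tensor_eq (Delta' (f x)) [seq (f p.1, f p.2) | p <- Delta x]) /\
  (forall x, A x -> eps' (f x) = eps x) /\
  (forall x, A x -> f (S x) = S' (f x)).

Definition super_hopf_morph (H K : algType k) (prH : bool -> H -> H) (prK : bool -> K -> K)
    (DH : H -> seq (H * H)) (DK : K -> seq (K * K)) (eH : H -> k) (eK : K -> k)
    (SH : H -> H) (SK : K -> K) (f : H -> K) : Prop :=
  hopf_morph_on (fun _ => True) (fun _ => True) DH DK eH eK SH SK f /\
  (forall i x, f (prH i x) = prK i (f x)).

(* J is the cocommutative Hopf algebra carried by the subalgebra A of W;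
   V is a subspace of U; [act] is the right action, [br] the bracket. *)
Definition rmodule_on (W : algType k) (U : lmodType k) (A : W -> Prop) (V : U -> Prop)
    (act : U -> W -> U) : Prop :=
  subspace V /\
  (forall v a, V v -> A a -> V (act v a)) /\
  (forall c u v a, V u -> V v -> A a -> act (c *: u + v) a = c *: act u a + act v a) /\
  (forall c v a b, V v -> A a -> A b -> act v (c *: a + b) = c *: act v a + act v b) /\
  (forall v, V v -> act v 1 = v) /\
  (forall v a b, V v -> A a -> A b -> act v (a * b) = act (act v a) b).

Definition dual_HC_pair (W : algType k) (A : W -> Prop) (Delta : W -> seq (W * W))
    (eps : W -> k) (S : W -> W) (U : lmodType k) (V : U -> Prop)
    (act : U -> W -> U) (br : U -> U -> W) : Prop :=
  cocomm_hopf_on A Delta eps S /\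
  rmodule_on A V act /\
  (forall u v, V u -> V v -> primitive_on A Delta (br u v)) /\
  (forall c u v w, V u -> V v -> V w -> br (c *: u + v) w = c *: br u w + br v w) /\
  (forall c u v w, V u -> V v -> V w -> br w (c *: u + v) = c *: br w u + br w v) /\
  (forall u v a, V u -> V v -> A a ->
     \sum_(p <- Delta a) br (act u p.1) (act v p.2) = \sum_(p <- Delta a) S p.1 * br u v * p.2) /\
  (forall u v, V u -> V v -> br u v = br v u) /\
  (forall v, V v -> act v (br v v) = 0).

Definition dual_HC_morph (W W' : algType k) (A : W -> Prop) (A' : W' -> Prop)
    (Delta : W -> seq (W * W)) (Delta' : W' -> seq (W' * W'))
    (eps : W -> k) (eps' : W' -> k) (S : W -> W) (S' : W' -> W')
    (U U' : lmodType k) (V : U -> Prop) (V' : U' -> Prop)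
    (act : U -> W -> U) (act' : U' -> W' -> U')
    (br : U -> U -> W) (br' : U' -> U' -> W') (f : W -> W') (g : U -> U') : Prop :=
  hopf_morph_on A A' Delta Delta' eps eps' S S' f /\
  (forall v, V v -> V' (g v)) /\
  (forall c u v, V u -> V v -> g (c *: u + v) = c *: g u + g v) /\
  (forall v a, V v -> A a -> g (act v a) = act' (g v) (f a)) /\
  (forall u v, V u -> V v -> f (br u v) = br' (g u) (g v)).

Definition even_part_sub (H : algType k) (pr : bool -> H -> H)
    (Delta : H -> seq (H * H)) : H -> Prop :=
  fun x => tensor_in (fun y => pr false y = y) (Delta x).

Definition odd_prim (H : algType k) (pr : bool -> H -> H)
    (Delta : H -> seq (H * H)) : H -> Prop :=
  fun x => pr true x = x /\ tensor_eq (Delta x) [:: (x, 1); (1, x)].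

Definition adj_act (H : algType k) (Delta : H -> seq (H * H)) (S : H -> H) (v a : H) : H :=
  \sum_(p <- Delta a) S p.1 * v * p.2.

Definition anticomm (H : algType k) (u v : H) : H := u * v + v * u.

End Defs.

(* Tensors are handled through representatives compared by scalar
   bilinear forms; linear functionals separating the points of a vector space
   (Zorn's lemma) transport such identities to vector-valued bilinear maps, so
   everything can be computed in Sweedler notation [sw x F = \sum F x_(1) x_(2)].

   The key point is that for [x] in [uH] (the paper's underline H) the coproduct
   has a representative with both entries in [uH].  Take a representative in
   [H_0 (x) H_0] of minimal length: by coassociativity, the odd-odd part of the
   coproduct of the left entries gives a linear relation among the right
   entries, so by minimality it vanishes and the left entries lie in [uH]; the
   right entries follow by flipping, since super-cocommutativity is plain
   cocommutativity on [H_0 (x) H_0].  Hence no Koszul sign survives over [uH],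
   which is an ordinary cocommutative Hopf algebra with anti-multiplicative
   antipode.  Then [V_H] is stable under the adjoint action,
   [(u <| a_(1)) (v <| a_(2)) = S(a_(1)) u v a_(2)] gives the equivariance of the
   bracket by cocommutativity, and functoriality is a direct check. *)

From HB Require Import structures.
From mathcomp Require Import all_boot all_order all_algebra ring.
From mathcomp Require Import boolp classical_sets.
Set Implicit Arguments. Unset Strict Implicit. Unset Printing Implicit Defensive.
Import GRing.Theory.
Local Open Scope ring_scope.

Section LinearFunctionLemmas.
Variables (k : fieldType) (U Z : lmodType k).
Implicit Types f g : U -> Z.

Lemma linear_fun0 f : linear f -> f 0 = 0.
Proof.
move=> h; apply: (addIr (f 0)); rewrite add0r; have := h 1 0 0.
by rewrite scale1r addr0 scale1r => e; rewrite -e.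
Qed.

Lemma linear_funD f : linear f -> forall x y, f (x + y) = f x + f y.
Proof. by move=> h x y; have := h 1 x y; rewrite !scale1r. Qed.

Lemma linear_funZ f : linear f -> forall a x, f (a *: x) = a *: f x.
Proof. by move=> h a x; have := h a x 0; rewrite addr0 (linear_fun0 h) addr0. Qed.

Lemma linear_funN f : linear f -> forall x, f (- x) = - f x.
Proof. by move=> h x; rewrite -scaleN1r linear_funZ // scaleN1r. Qed.

Lemma linear_funB f : linear f -> forall x y, f (x - y) = f x - f y.
Proof. by move=> h x y; rewrite linear_funD // linear_funN. Qed.

Lemma linear_fun_sum f : linear f -> forall I (r : seq I) (F : I -> U),
  f (\sum_(i <- r) F i) = \sum_(i <- r) f (F i).
Proof.
move=> h I r F; elim: r => [|i r IH]; first by rewrite !big_nil linear_fun0.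
by rewrite !big_cons linear_funD // IH.
Qed.

End LinearFunctionLemmas.

Section LinearClosure.
Variables (k : fieldType) (U W Z : lmodType k) (A : algType k).

Lemma lin_id : linear (fun x : U => x). Proof. by []. Qed.

Lemma lin_mull (f : U -> A) w : linear f -> linear (fun x => w * f x).
Proof. by move=> h a x y; rewrite h mulrDr scalerAr. Qed.

Lemma lin_mulr (f : U -> A) w : linear f -> linear (fun x => f x * w).
Proof. by move=> h a x y; rewrite h mulrDl scalerAl. Qed.

Lemma lin_add (f g : U -> Z) : linear f -> linear g -> linear (fun x => f x + g x).
Proof.
by move=> hf hg a x y; rewrite hf hg scalerDr -!addrA; congr (_ + _); rewrite addrCA.
Qed.

Lemma lin_scale (f : U -> Z) c : linear f -> linear (fun x => c *: f x).
Proof. by move=> hf a x y; rewrite hf scalerDr !scalerA mulrC. Qed.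

Lemma lin_app2_1 (G : W -> W -> Z) (f : U -> W) z :
  (forall w, linear (fun y => G y w)) -> linear f -> linear (fun x => G (f x) z).
Proof. by move=> hG hf a x y; rewrite hf hG. Qed.

Lemma lin_app2_2 (G : W -> W -> Z) (f : U -> W) z :
  (forall w, linear (G w)) -> linear f -> linear (fun x => G z (f x)).
Proof. by move=> hG hf a x y; rewrite hf hG. Qed.

Lemma lin_app3_1 (G : W -> W -> W -> Z) (f : U -> W) z z' :
  (forall v w, linear (fun y => G y v w)) -> linear f -> linear (fun x => G (f x) z z').
Proof. by move=> hG hf a x y; rewrite hf hG. Qed.

Lemma lin_app3_2 (G : W -> W -> W -> Z) (f : U -> W) z z' :
  (forall v w, linear (fun y => G v y w)) -> linear f -> linear (fun x => G z (f x) z').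
Proof. by move=> hG hf a x y; rewrite hf hG. Qed.

Lemma lin_app3_3 (G : W -> W -> W -> Z) (f : U -> W) z z' :
  (forall v w, linear (G v w)) -> linear f -> linear (fun x => G z z' (f x)).
Proof. by move=> hG hf a x y; rewrite hf hG. Qed.

Lemma lin_sum_fun I (r : seq I) (F : I -> U -> Z) :
  (forall i, linear (F i)) -> linear (fun x => \sum_(i <- r) F i x).
Proof.
move=> hF a x y; rewrite scaler_sumr -big_split; apply: eq_bigr => i _.
by rewrite hF.
Qed.

End LinearClosure.

Section SeparatingFunctional.
Variables (k : fieldType) (Z : lmodType k) (z : Z).
Hypothesis z_neq0 : z != 0.
Local Open Scope classical_set_scope.

(* Graph of a linear functional on a subspace of [Z] containing [z], with value
   [1] at [z]; the empty graph is admitted so that the empty chain is bounded. *)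
Definition partial_functional (G : set (Z * k)) : Prop :=
  (forall a p q, G p -> G q -> G (a *: p.1 + q.1, a * p.2 + q.2)) /\
  (forall c, G (0, c) -> c = 0) /\ (forall p, G p -> G (z, 1)).

Lemma partial_functional_bigcup (F : set (set (Z * k))) :
  F `<=` partial_functional -> total_on F subset ->
  partial_functional (\bigcup_(X in F) X).
Proof.
move=> FP Ftot; split; [|split].
- move=> a p q [X FX Xp] [Y FY Yq].
  case: (Ftot X Y FX FY) => [XY|YX].
    by exists Y => //; apply: (FP Y FY).1 => //; exact: XY.
  by exists X => //; apply: (FP X FX).1 => //; exact: YX.
- by move=> c [X FX Xp]; exact: (FP X FX).2.1 Xp.
- by move=> p [X FX Xp]; exists X => //; exact: (FP X FX).2.2 _ Xp.
Qed.

Section Maximal.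
Variable G : set (Z * k).
Hypotheses (PG : partial_functional G)
  (maxG : forall B, G `<` B -> ~ partial_functional B).

Lemma partial_functional_origin p : G p -> G (0, 0).
Proof.
by case: PG => Gcl _ Gp; have := Gcl (-1) p p Gp Gp; rewrite scaleN1r mulN1r !addNr.
Qed.

Lemma partial_functional_functional w c d : G (w, c) -> G (w, d) -> c = d.
Proof.
case: PG => Gcl [G0 _] Gc Gd; have := Gcl (-1) _ _ Gc Gd => /=.
rewrite scaleN1r mulN1r addNr => /G0 /eqP.
by rewrite addrC subr_eq0 => /eqP.
Qed.

Lemma maximal_partial_functional_z : G (z, 1).
Proof.
case: PG => _ [_ Gz]; have [[p Gp]|nG] := pselect (exists p, G p); first exact: Gz Gp.
pose L := fun p : Z * k => exists c, p = (c *: z, c).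
exfalso; apply: (maxG (B := L)).
  split; first by move=> p Gp; case: nG; exists p.
  by move=> /(_ (z, 1)) h; case: nG; exists (z, 1); apply: h; exists 1; rewrite scale1r.
split; [|split].
- by move=> a p q [c ->] [d ->] /=; exists (a * c + d); rewrite scalerDl scalerA.
- move=> c [d [e1 e2]]; move: e1; rewrite e2 => /esym/eqP.
  by rewrite scaler_eq0 (negbTE z_neq0) orbF => /eqP.
- by move=> p _; exists 1; rewrite scale1r.
Qed.

(* Otherwise [G] could be extended to the span of its domain and [w]. *)
Lemma maximal_partial_functional_total w : exists c, G (w, c).
Proof.
case: (PG) => Gcl [G0 _]; have Gz := maximal_partial_functional_z.
have G00 := partial_functional_origin Gz.
have [//|nw] := pselect (exists c, G (w, c)); exfalso.
pose B := fun p : Z * k => exists c q, G q /\ p = (q.1 + c *: w, q.2).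
apply: (maxG (B := B)).
  split; first by move=> [x c] Gp; exists 0, (x, c); rewrite scale0r addr0.
  move=> /(_ (w, 0)) h; case: nw; exists 0; apply: h.
  by exists 1, (0, 0); rewrite scale1r add0r.
split; [|split].
- move=> a p q [c [p' [Gp' ->]]] [d [q' [Gq' ->]]] /=.
  exists (a * c + d), (a *: p'.1 + q'.1, a * p'.2 + q'.2); split; first exact: Gcl.
  by congr (_, _); rewrite /= scalerDr scalerDl scalerA addrACA.
- move=> y [c [q [Gq [e1 e2]]]].
  have [c0|cn0] := eqVneq c 0.
    move: e1; rewrite c0 scale0r addr0 => e1.
    by rewrite e2; apply: G0; rewrite e1; case: q Gq {e1 e2}.
  case: nw; exists (- c^-1 * q.2).
  have := Gcl (- c^-1) q (0, 0) Gq G00 => /=; rewrite !addr0.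
  suff -> : - c^-1 *: q.1 = w by [].
  have -> : q.1 = - (c *: w) by apply/eqP; rewrite -addr_eq0 -e1.
  by rewrite scalerN scaleNr opprK scalerA mulVf // scale1r.
- by move=> p _; exists 0, (z, 1); rewrite scale0r addr0.
Qed.

End Maximal.

Lemma exists_functional_eq1 : exists lam : Z -> k^o, linear lam /\ lam z = 1.
Proof.
have [G [PG maxG]] := Zorn_bigcup partial_functional_bigcup.
pose lam w := projT1 (cid (maximal_partial_functional_total PG maxG w)).
have lamP w : G (w, lam w) by rewrite /lam; case: cid.
exists lam; split => [a x y|].
  apply: (partial_functional_functional PG (lamP _)).
  exact: PG.1 (x, lam x) (y, lam y) (lamP x) (lamP y).
exact: (partial_functional_functional PG (lamP z) (maximal_partial_functional_z PG maxG)).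
Qed.

End SeparatingFunctional.

Lemma functionals_separate (k : fieldType) (Z : lmodType k) (z : Z) :
  (forall lam : Z -> k^o, linear lam -> lam z = 0) -> z = 0.
Proof.
move=> h; apply/eqP/negP => /negP /exists_functional_eq1 [lam [lam_lin lamz]].
by move: (h lam lam_lin); rewrite lamz => /eqP; rewrite oner_eq0.
Qed.

Lemma scale_regular (k : fieldType) (a x : k) : a *: (x : k^o) = a * x.
Proof. by []. Qed.

Section BilinearForm.
Variables (k : fieldType) (W : lmodType k) (phi : W -> W -> k).
Hypothesis bphi : bilinear_form phi.

Lemma bilinear_form_linearl w : linear (fun y => phi y w : k^o).
Proof. by case: bphi => h _ a x y; rewrite h. Qed.

Lemma bilinear_form_linearr w : linear (phi w : W -> k^o).
Proof. by case: bphi => _ h a x y; rewrite h. Qed.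

Lemma bform0l z : phi 0 z = 0. Proof. by rewrite (linear_fun0 (bilinear_form_linearl z)). Qed.
Lemma bform0r z : phi z 0 = 0. Proof. by rewrite (linear_fun0 (bilinear_form_linearr z)). Qed.
Lemma bformZl a x z : phi (a *: x) z = a * phi x z.
Proof. by rewrite (linear_funZ (bilinear_form_linearl z)). Qed.
Lemma bformZr a x z : phi z (a *: x) = a * phi z x.
Proof. by rewrite (linear_funZ (bilinear_form_linearr z)). Qed.
Lemma bformDl x y z : phi (x + y) z = phi x z + phi y z.
Proof. by rewrite (linear_funD (bilinear_form_linearl z)). Qed.
Lemma bformDr x y z : phi z (x + y) = phi z x + phi z y.
Proof. by rewrite (linear_funD (bilinear_form_linearr z)). Qed.
Lemma bformNl x z : phi (- x) z = - phi x z.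
Proof. by rewrite (linear_funN (bilinear_form_linearl z)). Qed.
Lemma bformNr x z : phi z (- x) = - phi z x.
Proof. by rewrite (linear_funN (bilinear_form_linearr z)). Qed.
Lemma bform_sumr I (r : seq I) (F : I -> W) z :
  phi z (\sum_(i <- r) F i) = \sum_(i <- r) phi z (F i).
Proof. by rewrite (linear_fun_sum (bilinear_form_linearr z)). Qed.

Lemma bilinear_form_flip : bilinear_form (fun a b => phi b a).
Proof. by case: bphi => h1 h2; split => *; rewrite ?h1 ?h2. Qed.

End BilinearForm.

Lemma bilinear_form_mul (k : fieldType) (W : lmodType k) (f g : W -> k^o) :
  linear f -> linear g -> bilinear_form (fun a b => f a * g b).
Proof. by move=> hf hg; split=> a x y z; rewrite ?hf ?hg /= ?scale_regular; ring. Qed.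

Section Tensors.
Variables (k : fieldType) (W : lmodType k).
Implicit Types s t : seq (W * W).

(* Scalar bilinear forms detect equality of tensors; composing with the
   functionals that separate the points of [Z] extends this to [Z]-valued maps. *)
Lemma tensor_eq_sum (Z : lmodType k) s t : tensor_eq s t ->
  forall B : W -> W -> Z, (forall w, linear (fun x => B x w)) -> (forall w, linear (B w)) ->
  \sum_(p <- s) B p.1 p.2 = \sum_(p <- t) B p.1 p.2.
Proof.
move=> E B B1 B2; apply/eqP; rewrite -subr_eq0; apply/eqP.
apply: functionals_separate => lam hl.
rewrite (linear_funB hl) !(linear_fun_sum hl); apply/eqP; rewrite subr_eq0; apply/eqP.
by apply: (E (fun x y => lam (B x y))); split => a x y z; rewrite ?B1 ?B2 hl.
Qed.

Lemma tensor3_eq_sum (Z : lmodType k) (s t : seq (W * W * W)) : tensor3_eq s t ->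
  forall B : W -> W -> W -> Z, (forall v w, linear (fun x => B x v w)) ->
  (forall v w, linear (fun x => B v x w)) -> (forall v w, linear (B v w)) ->
  \sum_(p <- s) B p.1.1 p.1.2 p.2 = \sum_(p <- t) B p.1.1 p.1.2 p.2.
Proof.
move=> E B B1 B2 B3; apply/eqP; rewrite -subr_eq0; apply/eqP.
apply: functionals_separate => lam hl.
rewrite (linear_funB hl) !(linear_fun_sum hl); apply/eqP; rewrite subr_eq0; apply/eqP.
by apply: (E (fun x y z => lam (B x y z))); split; [|split] => a x y z w;
  rewrite ?B1 ?B2 ?B3 hl.
Qed.

Lemma tensor_eq_trans s t u : tensor_eq s t -> tensor_eq t u -> tensor_eq s u.
Proof. by move=> e1 e2 phi bphi; rewrite e1 // e2. Qed.

Lemma tensor_eq_flip s t : tensor_eq s t -> tensor_eq (flip s) (flip t).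
Proof.
move=> e phi bphi; rewrite /flip !big_map /=.
exact: (e (fun a b => phi b a) (bilinear_form_flip bphi)).
Qed.

Definition tensor_entries_in (P : W -> Prop) t := forall p, p \in t -> P p.1 /\ P p.2.

Lemma tensor_entries_in_flip P t :
  tensor_entries_in P t -> tensor_entries_in P (flip t).
Proof. by move=> tP p /mapP [q /tP [e1 e2] ->]. Qed.

(* A linear relation [sum_p w p *: p.2 = 0] with [w p0 != 0] expresses [p0.2]
   through the other right entries; substituting it removes the term [p0]. *)
Lemma tensor_eq_shorten (P : W -> Prop) t (w : W * W -> k) p0 : subspace P ->
  tensor_entries_in P t -> \sum_(p <- t) w p *: p.2 = 0 -> p0 \in t -> w p0 != 0 ->
  exists2 t', tensor_eq t t' & tensor_entries_in P t' /\ (size t' < size t)%N.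
Proof.
move=> [P0 Pcl] tP sum0 p0t wn0; case/splitPr: p0t tP sum0 => t1 t2 tP sum0.
have [P01 _] : P p0.1 /\ P p0.2 by apply: tP; rewrite mem_cat in_cons eqxx orbT.
have s0 : w p0 *: p0.2 + \sum_(p <- t1 ++ t2) w p *: p.2 = 0.
  by move: sum0; rewrite !big_cat big_cons /= addrCA.
have e2 : p0.2 = - \sum_(p <- t1 ++ t2) (w p / w p0) *: p.2.
  apply: (scalerI wn0); rewrite scalerN scaler_sumr.
  under eq_bigr do rewrite scalerA mulrCA mulfV // mulr1.
  by apply/eqP; rewrite -addr_eq0; apply/eqP.
exists [seq (p.1 - (w p / w p0) *: p0.1, p.2) | p <- t1 ++ t2]; last split.
- move=> phi bphi; rewrite big_map /= big_cat big_cons /= e2.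
  rewrite (bformNr bphi) (bform_sumr bphi) !big_cat /=.
  under [X in _ = X + _]eq_bigr do rewrite (bformDl bphi) (bformNl bphi) (bformZl bphi).
  under [X in _ = _ + X]eq_bigr do rewrite (bformDl bphi) (bformNl bphi) (bformZl bphi).
  under [X in _ + (- (X + _) + _) = _]eq_bigr do rewrite (bformZr bphi).
  under [X in _ + (- (_ + X) + _) = _]eq_bigr do rewrite (bformZr bphi).
  by rewrite !big_split /= !sumrN; ring.
- move=> p /mapP [q qt ->] /=; have [e1 e3] : P q.1 /\ P q.2.
    by apply: tP; move: qt; rewrite !mem_cat in_cons => /orP [] ->; rewrite ?orbT.
  split => //; rewrite -scaleN1r scalerA addrC -[_ *: p0.1]addr0.
  by rewrite -[X in P X]addrA; apply: Pcl => //; rewrite add0r.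
- by rewrite size_map !size_cat /= addnS.
Qed.

End Tensors.

Section Anticommutator.
Variables (k : fieldType) (H : algType k).

Lemma anticomm_linearl (c : k) (u v w : H) :
  anticomm (c *: u + v) w = c *: anticomm u w + anticomm v w.
Proof.
rewrite /anticomm mulrDl mulrDr -scalerAl -scalerAr scalerDr.
by rewrite -!addrA; congr (_ + _); rewrite addrCA.
Qed.

Lemma anticommC (u v : H) : anticomm u v = anticomm v u.
Proof. by rewrite /anticomm addrC. Qed.

End Anticommutator.

Section SuperCocommHopf.
Variables (k : fieldType) (H : algType k) (pr : bool -> H -> H)
  (D : H -> seq (H * H)) (eps : H -> k) (S : H -> H).
Hypothesis hyp : super_cocomm_hopf pr D eps S.

Ltac unpack := case: hyp => [[[gl [gi [go gs]]] [gm [p1 [[[_ [[_ [dl [el [ca [cl cr]]]]]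
   [dm [d1 [em e1]]]]] [_ [sl [al ar]]]] [dp [_ sp]]]]]] cc].

Lemma pr_linear b : linear (pr b). Proof. by unpack; move=> a x y; rewrite gl. Qed.
Lemma pr_id b x : pr b (pr b x) = pr b x. Proof. by unpack. Qed.
Lemma pr_orth b x : pr b (pr (~~ b) x) = 0. Proof. by unpack. Qed.
Lemma pr_decomp x : pr false x + pr true x = x. Proof. by unpack. Qed.
Lemma pr_homogeneous_mul i j x y : pr (i (+) j) (pr i x * pr j y) = pr i x * pr j y.
Proof. by unpack. Qed.
Lemma pr_false1 : pr false 1 = 1. Proof. by unpack. Qed.
Lemma Delta_linear a x y : tensor_eq (D (a *: x + y)) ([seq (a *: p.1, p.2) | p <- D x] ++ D y).
Proof. by unpack; apply: dl. Qed.
Lemma eps_linear a x y : eps (a *: x + y) = a * eps x + eps y. Proof. by unpack; apply: el. Qed.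
Lemma coassoc x : tensor3_eq [seq (p.1, q.1, q.2) | p <- D x, q <- D p.2]
     [seq (q.1, q.2, p.2) | p <- D x, q <- D p.1].
Proof. by unpack; apply: ca. Qed.
Lemma counitL x : \sum_(p <- D x) eps p.1 *: p.2 = x. Proof. by unpack; apply: cl. Qed.
Lemma counitR x : \sum_(p <- D x) eps p.2 *: p.1 = x. Proof. by unpack; apply: cr. Qed.
Lemma DeltaM x y : tensor_eq (D (x * y)) (stmul pr (D x) (D y)). Proof. by unpack; apply: dm. Qed.
Lemma Delta1 : tensor_eq (D 1) [:: (1, 1)]. Proof. by unpack. Qed.
Lemma epsM x y : eps (x * y) = eps x * eps y. Proof. by unpack; apply: em. Qed.
Lemma eps1 : eps 1 = 1. Proof. by unpack. Qed.
Lemma S_linear : linear S. Proof. by unpack; move=> a x y; apply: sl. Qed.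
Lemma antipodeL x : \sum_(p <- D x) S p.1 * p.2 = eps x *: 1. Proof. by unpack; apply: al. Qed.
Lemma antipodeR x : \sum_(p <- D x) p.1 * S p.2 = eps x *: 1. Proof. by unpack; apply: ar. Qed.
Lemma Delta_pr i x : tensor_eq (D (pr i x))
   [seq (pr j p.1, pr (i (+) j) p.2) | p <- D x, j <- [:: false; true]].
Proof. by unpack; apply: dp. Qed.
Lemma S_pr i x : S (pr i x) = pr i (S x). Proof. by unpack. Qed.
Lemma super_cocomm x : tensor_eq (D x) (sflip pr (D x)). Proof. by unpack. Qed.

Definition sw (Z : lmodType k) (x : H) (F : H -> H -> Z) := \sum_(p <- D x) F p.1 p.2.

Section Sweedler.
Variable Z : lmodType k.
Implicit Types F G : H -> H -> Z.

Lemma sw_tensor x t F : tensor_eq (D x) t ->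
  (forall w, linear (fun y => F y w)) -> (forall w, linear (F w)) ->
  sw x F = \sum_(p <- t) F p.1 p.2.
Proof. by move=> Dxt F1 F2; rewrite /sw (tensor_eq_sum Dxt). Qed.

Lemma sw_linear F : (forall w, linear (fun y => F y w)) -> (forall w, linear (F w)) ->
  linear (fun x => sw x F).
Proof.
move=> F1 F2 a x y; rewrite /sw (tensor_eq_sum (Delta_linear a x y)) // big_cat big_map /=.
by rewrite scaler_sumr; congr (_ + _); apply: eq_bigr => p _; rewrite (linear_funZ (F1 p.2)).
Qed.

Lemma sw_scaler x c F : sw x (fun a b => c *: F a b) = c *: sw x F.
Proof. by rewrite /sw scaler_sumr. Qed.
Lemma sw_split x F G : sw x (fun a b => F a b + G a b) = sw x F + sw x G.
Proof. by rewrite /sw big_split. Qed.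
Lemma eq_sw x F G : (forall a b, F a b = G a b) -> sw x F = sw x G.
Proof. by move=> e; apply: eq_bigr => p _; apply: e. Qed.
Lemma sw_comp (Y : lmodType k) x (F : H -> H -> Y) (L : Y -> Z) : linear L ->
  sw x (fun a b => L (F a b)) = L (sw x F).
Proof. by move=> hL; rewrite /sw linear_fun_sum. Qed.

Lemma sw_counitL x (L : H -> Z) : linear L -> sw x (fun a b => eps a *: L b) = L x.
Proof.
by move=> hL; rewrite -{2}(counitL x) linear_fun_sum //; apply: eq_bigr => p _; rewrite linear_funZ.
Qed.
Lemma sw_counitR x (L : H -> Z) : linear L -> sw x (fun a b => eps b *: L a) = L x.
Proof.
by move=> hL; rewrite -{2}(counitR x) linear_fun_sum //; apply: eq_bigr => p _; rewrite linear_funZ.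
Qed.
Lemma sw_antipodeL x (L : H -> Z) : linear L -> sw x (fun a b => L (S a * b)) = eps x *: L 1.
Proof. by move=> hL; rewrite sw_comp // /sw antipodeL linear_funZ. Qed.
Lemma sw_antipodeR x (L : H -> Z) : linear L -> sw x (fun a b => L (a * S b)) = eps x *: L 1.
Proof. by move=> hL; rewrite sw_comp // /sw antipodeR linear_funZ. Qed.

Lemma sw1 F : (forall w, linear (fun y => F y w)) -> (forall w, linear (F w)) ->
  sw 1 F = F 1 1.
Proof. by move=> F1 F2; rewrite (sw_tensor Delta1) // big_seq1. Qed.

Lemma sw_coassoc x (G : H -> H -> H -> Z) :
  (forall v w, linear (fun y => G y v w)) -> (forall v w, linear (fun y => G v y w)) ->
  (forall v w, linear (G v w)) ->
  sw x (fun a b => sw b (fun c d => G a c d)) = sw x (fun a b => sw a (fun c d => G c d b)).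
Proof.
move=> G1 G2 G3; have := tensor3_eq_sum (coassoc x) G1 G2 G3.
by rewrite !big_allpairs_dep.
Qed.
End Sweedler.

Section HopfLinearity.
Variables (U Z : lmodType k).

Lemma lin_S (f : U -> H) : linear f -> linear (fun x => S (f x)).
Proof. by move=> h a x y; rewrite h S_linear. Qed.
Lemma lin_pr (f : U -> H) b : linear f -> linear (fun x => pr b (f x)).
Proof. by move=> h a x y; rewrite h pr_linear. Qed.
Lemma lin_epsZ (f : U -> H) (w : Z) : linear f -> linear (fun x => eps (f x) *: w).
Proof. by move=> hf a x y; rewrite hf eps_linear scalerDl scalerA. Qed.
Lemma lin_sw_arg (f : U -> H) (F : H -> H -> Z) :
  (forall w, linear (fun y => F y w)) -> (forall w, linear (F w)) -> linear f ->
  linear (fun x => sw (f x) F).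
Proof. by move=> F1 F2 hf a x y; rewrite hf (sw_linear F1 F2). Qed.
Lemma lin_sw_fun y (F : U -> H -> H -> Z) :
  (forall a b, linear (fun x => F x a b)) -> linear (fun x => sw y (F x)).
Proof.
move=> hF a x z; rewrite /sw scaler_sumr -big_split; apply: eq_bigr => p _.
by rewrite hF.
Qed.
End HopfLinearity.

Definition act := adj_act D S.

Lemma actE v a : act v a = sw a (fun p q => S p * v * q). Proof. by []. Qed.

Lemma act_linearl c u v a : act (c *: u + v) a = c *: act u a + act v a.
Proof.
rewrite !actE -sw_scaler -sw_split; apply: eq_sw => p q.
by rewrite mulrDr mulrDl -scalerAr -scalerAl.
Qed.

Lemma act_linearr c v a b : act v (c *: a + b) = c *: act v a + act v b.
Proof.
rewrite !actE sw_linear // => w; last by apply: lin_mull; exact: lin_id.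
by apply: lin_mulr; apply: lin_mulr; apply: lin_S; exact: lin_id.
Qed.

Lemma lin_act (U : lmodType k) v (f : U -> H) : linear f -> linear (fun x => act v (f x)).
Proof. by move=> hf c x y; rewrite hf act_linearr. Qed.

Ltac linearity := repeat (cbv beta; first
  [ match goal with |- forall _, _ => intro end
  | apply: lin_id
  | apply: lin_sw_arg | apply: lin_sw_fun | apply: lin_S | apply: lin_pr
  | apply: lin_mulr | apply: lin_mull | apply: lin_add
  | apply: lin_scale | apply: lin_epsZ | apply: lin_sum_fun | apply: lin_act
  | (eapply lin_app2_1; [eassumption|]) | (eapply lin_app2_2; [eassumption|])
  | (eapply lin_app3_1; [eassumption|]) | (eapply lin_app3_2; [eassumption|])
  | (eapply lin_app3_3; [eassumption|])
  | eassumption ]).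

Definition even y := pr false y = y.
Definition uH := even_part_sub pr D.

Lemma even_pr_true y : even y -> pr true y = 0.
Proof. by move=> <-; apply: (pr_orth true). Qed.
Lemma even_linear a x y : even x -> even y -> even (a *: x + y).
Proof. by rewrite /even pr_linear => -> ->. Qed.
Lemma even0 : even 0. Proof. by rewrite /even (linear_fun0 (pr_linear false)). Qed.
Lemma even1 : even 1. Proof. exact: pr_false1. Qed.
Lemma evenM x y : even x -> even y -> even (x * y).
Proof. by rewrite /even => ex ey; have := pr_homogeneous_mul false false x y; rewrite ex ey. Qed.
Lemma even_S y : even y -> even (S y).
Proof. by rewrite /even => ey; rewrite -S_pr ey. Qed.
Lemma even_pr y : even (pr false y). Proof. exact: pr_id. Qed.
Lemma evenZ a x : even x -> even (a *: x).
Proof. by rewrite /even (linear_funZ (pr_linear false)) => ->. Qed.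
Lemma odd_pr_false y : pr true y = y -> pr false y = 0.
Proof. by move=> <-; apply: (pr_orth false). Qed.

Lemma big_parities (Z : lmodType k) (g : bool * bool -> Z) :
  \sum_(ij <- parities) g ij =
  g (false, false) + g (false, true) + g (true, false) + g (true, true).
Proof. by rewrite /parities !big_cons big_nil addr0 !addrA. Qed.

Lemma sum_stmul (Z : lmodType k) s t (F : H -> H -> Z) :
  (forall w, linear (fun y => F y w)) ->
  \sum_(p <- stmul pr s t) F p.1 p.2 = \sum_(p <- s) \sum_(q <- t)
     \sum_(ij <- parities) (-1) ^+ (ij.1 && ij.2) *: F (p.1 * pr ij.2 q.1) (pr ij.1 p.2 * q.2).
Proof.
move=> F1; rewrite /stmul big_flatten /= big_allpairs_dep /=; apply: eq_bigr => p _.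
apply: eq_bigr => q _; rewrite big_parities /= !big_cons big_nil /= addr0 !addrA.
by rewrite !(linear_funZ (F1 _)).
Qed.

Lemma sum_sflip (Z : lmodType k) s (F : H -> H -> Z) :
  (forall w, linear (fun y => F y w)) ->
  \sum_(p <- sflip pr s) F p.1 p.2 = \sum_(p <- s)
     \sum_(ij <- parities) (-1) ^+ (ij.1 && ij.2) *: F (pr ij.2 p.2) (pr ij.1 p.1).
Proof.
move=> F1; rewrite /sflip big_flatten /= big_map; apply: eq_bigr => p _.
rewrite big_parities /= !big_cons big_nil /= addr0 !addrA.
by rewrite !(linear_funZ (F1 _)).
Qed.

Section SweedlerMul.
Variable Z : lmodType k.
Implicit Types F : H -> H -> Z.

Lemma sw_mul_uHr x y F : uH y ->
  (forall w, linear (fun y => F y w)) -> (forall w, linear (F w)) ->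
  sw (x * y) F = sw x (fun a b => sw y (fun c d => F (a * c) (b * d))).
Proof.
move=> [t Et tE] F1 F2; rewrite (sw_tensor (DeltaM x y)) // sum_stmul //.
apply: eq_bigr => p _; rewrite /= (sw_tensor Et); try by linearity.
rewrite (@tensor_eq_sum _ _ _ _ _ Et (fun c d : H =>
   \sum_(ij <- parities) (-1) ^+ (ij.1 && ij.2) *: F (p.1 * pr ij.2 c) (pr ij.1 p.2 * d))); last 2 first.
- move=> w; apply: lin_sum_fun => ij; apply: lin_scale; linearity.
- move=> w; apply: lin_sum_fun => ij; apply: lin_scale; linearity.
apply: eq_big_seq => q /tE [e1 e2]; rewrite big_parities /= (even_pr_true e1) e1.
rewrite !mulr0 !(linear_fun0 (F1 _)) !scaler0 !addr0 !expr0 !scale1r.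
by rewrite -(linear_funD (F2 _)) -mulrDl pr_decomp.
Qed.

Lemma sw_mul_uHl x y F : uH x ->
  (forall w, linear (fun y => F y w)) -> (forall w, linear (F w)) ->
  sw (x * y) F = sw x (fun a b => sw y (fun c d => F (a * c) (b * d))).
Proof.
move=> [t Et tE] F1 F2; rewrite (sw_tensor (DeltaM x y)) // sum_stmul //.
rewrite (@tensor_eq_sum _ _ _ _ _ Et (fun a b : H =>
   \sum_(q <- D y) \sum_(ij <- parities) (-1) ^+ (ij.1 && ij.2) *:
   F (a * pr ij.2 q.1) (pr ij.1 b * q.2))); last 2 first.
- move=> w; apply: lin_sum_fun => q; apply: lin_sum_fun => ij; apply: lin_scale; linearity.
- move=> w; apply: lin_sum_fun => q; apply: lin_sum_fun => ij; apply: lin_scale; linearity.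
rewrite (sw_tensor Et); try by linearity.
apply: eq_big_seq => p /tE [e1 e2]; apply: eq_bigr => q _.
rewrite big_parities /= (even_pr_true e2) e2.
rewrite !mul0r !(linear_fun0 (F2 _)) !scaler0 !addr0 !expr0 !scale1r.
by rewrite -(linear_funD (F1 _)) -mulrDr pr_decomp.
Qed.
End SweedlerMul.

Lemma sw_cocomm_uH (Z : lmodType k) x (F : H -> H -> Z) : uH x ->
  (forall w, linear (fun y => F y w)) -> (forall w, linear (F w)) ->
  sw x F = sw x (fun a b => F b a).
Proof.
move=> [t Et tE] F1 F2; rewrite /sw (tensor_eq_sum (super_cocomm x)) // sum_sflip //.
rewrite (@tensor_eq_sum _ _ _ _ _ Et (fun a b : H => \sum_(ij <- parities)
   (-1) ^+ (ij.1 && ij.2) *: F (pr ij.2 b) (pr ij.1 a))); last 2 first.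
- move=> w; apply: lin_sum_fun => ij; apply: lin_scale; linearity.
- move=> w; apply: lin_sum_fun => ij; apply: lin_scale; linearity.
rewrite (@tensor_eq_sum _ _ _ _ _ Et (fun a b : H => F b a)); try by linearity.
apply: eq_big_seq => p /tE [e1 e2]; rewrite big_parities /= !even_pr_true // e1 e2.
by rewrite !(linear_fun0 (F1 _)) !(linear_fun0 (F2 _)) !scaler0 !addr0 expr0 scale1r.
Qed.

Lemma tensor_eq_of_sw x (t : seq (H * H)) : (forall phi : H -> H -> k, bilinear_form phi ->
  (forall w, linear (fun y => phi y w : k^o)) -> (forall w, linear (phi w : H -> k^o)) ->
  @sw k^o x phi = \sum_(p <- t) (phi p.1 p.2 : k^o)) -> tensor_eq (D x) t.
Proof.
move=> h phi bphi.
by apply: h => //; [exact: bilinear_form_linearl|exact: bilinear_form_linearr].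
Qed.

Lemma cocomm_uH x : uH x -> tensor_eq (D x) (flip (D x)).
Proof.
move=> Ax; apply: tensor_eq_of_sw => phi bphi L1 L2.
by rewrite sw_cocomm_uH // /flip big_map.
Qed.

Lemma sw_bform phi : bilinear_form phi -> linear (fun x => @sw k^o x phi).
Proof.
by move=> bphi; apply: sw_linear; [exact: bilinear_form_linearl|exact: bilinear_form_linearr].
Qed.

Lemma bilinear_form_prl phi b : bilinear_form phi -> bilinear_form (fun x y => phi (pr b x) y).
Proof. by case=> h1 h2; split=> *; rewrite ?pr_linear ?h1 ?h2. Qed.

Lemma bilinear_form_prr phi b : bilinear_form phi -> bilinear_form (fun x y => phi x (pr b y)).
Proof. by case=> h1 h2; split=> *; rewrite ?pr_linear ?h1 ?h2. Qed.

Definition odd_odd (phi : H -> H -> k) (x : H) : k :=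
  \sum_(q <- D x) phi (pr true q.1) (pr true q.2).

Lemma uH_of_odd_odd0 x : even x -> (forall phi, bilinear_form phi -> odd_odd phi x = 0) ->
  uH x.
Proof.
move=> ex h0; exists [seq (pr false q.1, pr false q.2) | q <- D x]; last first.
  by move=> p /mapP [q _ ->]; split; apply: even_pr.
move=> phi bphi; rewrite -{1}ex (Delta_pr false x bphi) big_allpairs_dep big_map /=.
under eq_bigr do rewrite !big_cons big_nil addr0.
by rewrite big_split /= -/(odd_odd phi x) (h0 _ bphi) addr0.
Qed.

Definition even_rep x t := tensor_eq (D x) t /\ tensor_entries_in even t.

Lemma even_subspace : subspace even.
Proof. by split; [exact: even0|exact: even_linear]. Qed.

Lemma even_rep_uH x t : even_rep x t -> uH x.
Proof. by case=> Et tE; exists t. Qed.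

Lemma even_rep_flip x t : even_rep x t -> even_rep x (flip t).
Proof.
move=> rep_t; split; last exact: tensor_entries_in_flip rep_t.2.
exact: tensor_eq_trans (cocomm_uH (even_rep_uH rep_t)) (tensor_eq_flip rep_t.1).
Qed.

(* Coassociativity moves the odd-odd part onto the left factors of [t], which are even. *)
Lemma sum_odd_odd_fst x t phi : even_rep x t -> bilinear_form phi ->
  \sum_(p <- t) odd_odd phi p.1 *: p.2 = 0.
Proof.
move=> [Et tE] bphi; have bphi' := bilinear_form_prl true (bilinear_form_prr true bphi).
apply: functionals_separate => lam hl; rewrite (linear_fun_sum hl).
transitivity (\sum_(p <- t) (odd_odd phi p.1 * lam p.2 : k^o)).
  by apply: eq_bigr => q _; rewrite (linear_funZ hl).
rewrite -(Et _ (bilinear_form_mul (sw_bform bphi') hl)) /odd_odd.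
under eq_bigr do rewrite big_distrl /=.
have tri : trilinear_form (fun a b d => phi (pr true a) (pr true b) * lam d).
  split; [|split] => a' x' y' z' w'; rewrite ?(pr_linear true) ?hl /= ?scale_regular;
  by rewrite ?(bformDl bphi) ?(bformDr bphi) ?(bformZl bphi) ?(bformZr bphi); ring.
have := coassoc x tri; rewrite !big_allpairs_dep /= => <-.
have bf2 : bilinear_form (fun a b => \sum_(q <- D b) phi (pr true a) (pr true q.1) * lam q.2).
  split => a' x' y' z'.
    rewrite big_distrr -big_split; apply: eq_bigr => q _ /=.
    by rewrite (pr_linear true) (bformDl bphi) (bformZl bphi); ring.
  have bf3 := bilinear_form_mul
    (bilinear_form_linearr (bilinear_form_prr true bphi) (pr true z')) hl.
  by have := sw_bform bf3 a' x' y'; rewrite /sw scale_regular.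
rewrite (Et _ bf2); apply: big1_seq => q /tE [f1 _] /=; rewrite (even_pr_true f1).
by apply: big1 => r _; rewrite (bform0l bphi) mul0r.
Qed.

(* Otherwise [tensor_eq_shorten] would produce a shorter even representative. *)
Lemma minimal_even_rep_fst x t : even_rep x t ->
  (forall t', even_rep x t' -> (size t <= size t')%N) -> forall p, p \in t -> uH p.1.
Proof.
move=> rep_t tmin p pt; have [ep1 _] := rep_t.2 p pt.
apply: uH_of_odd_odd0 => // phi bphi; apply/eqP/negP => /negP cn0.
have [t' Et' [tE' lt]] := tensor_eq_shorten even_subspace rep_t.2
  (sum_odd_odd_fst rep_t bphi) pt cn0.
have := tmin t' (conj (tensor_eq_trans rep_t.1 Et') tE').
by rewrite leqNgt lt.
Qed.

Lemma exists_minimal_even_rep x : uH x ->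
  exists2 t, even_rep x t & forall t', even_rep x t' -> (size t <= size t')%N.
Proof.
move=> [t0 Et0 tE0]; pose P n := `[< exists2 t, even_rep x t & size t = n >].
have exP : exists n, P n by exists (size t0); apply/asboolP; exists t0.
case: (ex_minnP exP) => n /asboolP [t rep_t <-] tmin.
by exists t => // t' rep_t'; apply: tmin; apply/asboolP; exists t'.
Qed.

Lemma uH_rep x : uH x -> exists2 t, tensor_eq (D x) t & tensor_entries_in uH t.
Proof.
move=> /exists_minimal_even_rep [t rep_t tmin]; exists t; first exact: rep_t.1.
move=> p pt; split; first exact: minimal_even_rep_fst rep_t tmin p pt.
apply: (minimal_even_rep_fst (even_rep_flip rep_t)) (p.2, p.1) _.
  by move=> t' /tmin; rewrite size_map.
exact: (map_f (fun p : H * H => (p.2, p.1))).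
Qed.

Lemma eq_sw_uH (Z : lmodType k) x (F G : H -> H -> Z) : uH x ->
  (forall w, linear (fun y => F y w)) -> (forall w, linear (F w)) ->
  (forall w, linear (fun y => G y w)) -> (forall w, linear (G w)) ->
  (forall a b, uH a -> uH b -> F a b = G a b) -> sw x F = sw x G.
Proof.
move=> /uH_rep [t Et tA] F1 F2 G1 G2 e.
rewrite (sw_tensor Et) // (sw_tensor Et) //; apply: eq_big_seq => p /tA [] //.
exact: e.
Qed.

Section SweedlerCoassoc.
Variable Z : lmodType k.

Lemma exchange_sw x y (F : H -> H -> H -> H -> Z) :
  sw x (fun a b => sw y (fun c d => F a b c d)) = sw y (fun c d => sw x (fun a b => F a b c d)).
Proof. exact: exchange_big. Qed.

Variable K : H -> H -> H -> H -> Z.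
Hypotheses (K1 : forall u v w, linear (fun y => K y u v w))
  (K2 : forall u v w, linear (fun y => K u y v w))
  (K3 : forall u v w, linear (fun y => K u v y w)) (K4 : forall u v w, linear (K u v w)).

Lemma sw_coassoc4 x :
  sw x (fun p q => sw p (fun e f => sw q (fun g h => K e f g h))) =
  sw x (fun e q => sw q (fun m h => sw m (fun f g => K e f g h))).
Proof.
rewrite -(@sw_coassoc _ x (fun e f q => sw q (fun g h => K e f g h))); try by linearity.
apply: eq_sw => e q.
by rewrite (@sw_coassoc _ q (fun f g h => K e f g h)); try by linearity.
Qed.
End SweedlerCoassoc.

Lemma sw_swap_middle (Z : lmodType k) x (K : H -> H -> H -> H -> Z) : uH x ->
  (forall u v w, linear (fun y => K y u v w)) -> (forall u v w, linear (fun y => K u y v w)) ->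
  (forall u v w, linear (fun y => K u v y w)) -> (forall u v w, linear (K u v w)) ->
  sw x (fun p q => sw p (fun e f => sw q (fun g h => K e f g h))) =
  sw x (fun p q => sw p (fun e f => sw q (fun g h => K e g f h))).
Proof.
move=> Ax K1 K2 K3 K4.
rewrite sw_coassoc4 // (sw_coassoc4 (K := fun e f g h => K e g f h)); try by linearity.
apply: eq_sw_uH; try by linearity.
move=> e q _ Aq; apply: eq_sw_uH; try by linearity.
by move=> m h Am _; apply: sw_cocomm_uH => //; linearity.
Qed.

Section AntipodeConvolution.
Variable Z : lmodType k.
Variable G : H -> H -> Z.
Hypotheses (G1 : forall w, linear (fun y => G y w)) (G2 : forall w, linear (G w)).

Lemma sw_Delta_antipodeL a : uH a ->
  sw a (fun a1 a2 => sw (S a1) (fun u w => sw a2 (fun c d => G (u * c) (w * d)))) = eps a *: G 1 1.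
Proof.
move=> Aa; rewrite (eq_sw_uH (G := fun a1 a2 => sw (S a1 * a2) G)) //; try by linearity.
  by rewrite (@sw_antipodeL _ _ (fun z => sw z G)) ?sw1 //; linearity.
by move=> a1 a2 _ A2; rewrite sw_mul_uHr.
Qed.

Lemma sw_Delta_antipodeR b : uH b ->
  sw b (fun b1 b2 => sw b1 (fun u w => sw b2 (fun c d => G (u * S c) (w * S d)))) = eps b *: G 1 1.
Proof.
move=> Ab; rewrite (sw_swap_middle (K := fun u w c d => G (u * S c) (w * S d))) //;
  try by linearity.
rewrite -(@sw_counitR _ b (fun z => eps z *: G 1 1)); last by linearity.
apply: eq_sw => b1 b2.
under eq_sw => u w do rewrite (@sw_antipodeR _ _ (fun z => G (u * S w) z)) //.
by rewrite sw_scaler (@sw_antipodeR _ _ (fun z => G z 1)) //; linearity.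
Qed.
End AntipodeConvolution.

(* Both sides are convolution inverses of [Delta] on [uH]. *)
Lemma sw_antipode_uH (Z : lmodType k) x (G : H -> H -> Z) : uH x ->
  (forall w, linear (fun y => G y w)) -> (forall w, linear (G w)) ->
  sw (S x) G = sw x (fun a b => G (S a) (S b)).
Proof.
move=> Ax G1 G2.
rewrite -(@sw_counitR _ x (fun z => sw (S z) G)); last by linearity.
have -> : sw x (fun a b => eps b *: sw (S a) G) = sw x (fun a b => sw (S a) (fun u w => sw b
   (fun b1 b2 => sw b1 (fun p q => sw b2 (fun c d => G (u * p * S c) (w * q * S d)))))).
  apply: eq_sw_uH => //; try by linearity.
  move=> a b _ Ab; rewrite -sw_scaler; apply: eq_sw => u w.
  have := sw_Delta_antipodeR (G := fun z z' => G (u * z) (w * z')) _ _ Ab.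
  rewrite !mulr1 => <-; try by linearity.
  apply: eq_sw => b1 b2; apply: eq_sw => p q; apply: eq_sw => c d.
  by rewrite !mulrA.
transitivity (sw x (fun a b => sw b (fun b1 b2 => sw (S a) (fun u w => sw b1
   (fun p q => sw b2 (fun c d => G (u * p * S c) (w * q * S d))))))).
  by apply: eq_sw => a b; rewrite exchange_sw.
rewrite (@sw_coassoc _ x (fun a b1 b2 => sw (S a) (fun u w => sw b1
   (fun p q => sw b2 (fun c d => G (u * p * S c) (w * q * S d)))))); try by linearity.
rewrite -(@sw_counitL _ x (fun z => sw z (fun c d => G (S c) (S d)))); last by linearity.
apply: eq_sw_uH => //; try by linearity.
move=> a' b2 Aa' _.
have := sw_Delta_antipodeL (G := fun z z' => sw b2 (fun c d => G (z * S c) (z' * S d))) _ _ Aa'.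
move=> ->; try by linearity.
by congr (_ *: _); apply: eq_sw => c d; rewrite !mul1r.
Qed.

Lemma epsM_sw_antipodeR b d : (eps b * eps d) *: (1 : H) =
  sw b (fun p q => sw d (fun r s => p * r * (S s * S q))).
Proof.
transitivity (sw b (fun p q => eps d *: (p * S q))).
  by rewrite sw_scaler /sw antipodeR scalerA mulrC.
apply: eq_sw => p q.
transitivity (sw d (fun r s => p * (r * S s) * S q)); last first.
  by apply: eq_sw => r s; rewrite !mulrA.
by rewrite (@sw_antipodeR _ _ (fun z => p * z * S q)) ?mulr1 //; linearity.
Qed.

(* [S (x y) = S (x_1 y_1) x_2 y_2 S y_3 S x_3 = S y S x], using that [Delta] is
   multiplicative without signs on [uH]. *)
Lemma antipodeM_uH x y : uH x -> uH y -> S (x * y) = S y * S x.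
Proof.
move=> Ax Ay.
rewrite -(@sw_counitR _ x (fun z => S (z * y))); last by linearity.
transitivity (sw x (fun a b => sw y (fun c d => S (a * c) * ((eps b * eps d) *: 1)))).
  apply: eq_sw => a b; rewrite -(@sw_counitR _ y (fun z => S (a * z))); last by linearity.
  by rewrite -sw_scaler; apply: eq_sw => c d; rewrite mulr_algr scalerA.
transitivity (sw x (fun a b => sw b (fun p q => sw y (fun c d => sw d (fun r s =>
    S (a * c) * (p * r) * (S s * S q)))))).
  apply: eq_sw => a b; rewrite exchange_sw; apply: eq_sw => c d; rewrite epsM_sw_antipodeR.
  rewrite -(@sw_comp _ _ b _ (fun z => S (a * c) * z)); last by linearity.
  apply: eq_sw => p q; rewrite -(@sw_comp _ _ d _ (fun z => S (a * c) * z)); last by linearity.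
  by apply: eq_sw => r s; rewrite !mulrA.
rewrite (@sw_coassoc _ x (fun a p q => sw y (fun c d => sw d (fun r s =>
    S (a * c) * (p * r) * (S s * S q))))); try by linearity.
transitivity (sw x (fun a' q => sw y (fun c' s => sw a' (fun a p => sw c' (fun c r =>
    S (a * c) * (p * r) * (S s * S q)))))).
  apply: eq_sw => a' q; rewrite exchange_sw.
  transitivity (sw y (fun c d => sw d (fun r s => sw a' (fun a p =>
     S (a * c) * (p * r) * (S s * S q))))).
    by apply: eq_sw => c d; rewrite exchange_sw.
  rewrite (@sw_coassoc _ y (fun c r s => sw a' (fun a p =>
     S (a * c) * (p * r) * (S s * S q)))); try by linearity.
  by apply: eq_sw => c' s; rewrite exchange_sw.
transitivity (sw x (fun a' q => sw y (fun c' s => eps a' *: (eps c' *: (S s * S q))))).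
  apply: eq_sw_uH => //; try by linearity.
  move=> a' q _ _; apply: eq_sw_uH => //; try by linearity.
  move=> c' s Ac' _.
  rewrite -(@sw_mul_uHr _ a' c' (fun u v => S u * v * (S s * S q))) //; try by linearity.
  rewrite (@sw_antipodeL _ _ (fun z => z * (S s * S q))); last by linearity.
  by rewrite epsM mul1r scalerA.
transitivity (sw x (fun a' q => eps a' *: (S y * S q))).
  apply: eq_sw => a' q; rewrite sw_scaler; congr (_ *: _).
  by apply: (@sw_counitL _ y (fun z => S z * S q)); linearity.
by apply: (@sw_counitL _ x (fun z => S y * S z)); linearity.
Qed.

Lemma Delta0 : tensor_eq (D 0) [::].
Proof. by move=> phi bphi; rewrite big_nil; exact: (linear_fun0 (sw_bform bphi)). Qed.

Lemma uH0 : uH 0.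
Proof. by exists [::]; [exact: Delta0|]. Qed.

Lemma uH_linear a x y : uH x -> uH y -> uH (a *: x + y).
Proof.
move=> [t1 E1 tE1] [t2 E2 tE2]; exists ([seq (a *: p.1, p.2) | p <- t1] ++ t2).
  move=> phi bphi; have := sw_bform bphi a x y; rewrite /sw scale_regular => ->.
  rewrite (E1 _ bphi) (E2 _ bphi) big_cat big_map /= big_distrr; congr (_ + _).
  by apply: eq_bigr => p _; rewrite (bformZl bphi).
move=> p; rewrite mem_cat => /orP [/mapP [q /tE1 [e1 e2] ->]|/tE2 //].
by split => //; apply: evenZ.
Qed.

Lemma uH1 : uH 1.
Proof.
by exists [:: (1, 1)]; [exact: Delta1|move=> p; rewrite inE => /eqP ->; split; exact: even1].
Qed.

Lemma uHM x y : uH x -> uH y -> uH (x * y).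
Proof.
move=> Ax Ay; case: (Ax) => [t1 E1 tE1]; case: (Ay) => [t2 E2 tE2].
exists [seq (p.1 * q.1, p.2 * q.2) | p <- t1, q <- t2]; last first.
  by move=> p /allpairsPdep [p1 [q1 [/tE1 [e1 e2] /tE2 [e3 e4] ->]]]; split; apply: evenM.
apply: tensor_eq_of_sw => phi bphi L1 L2; rewrite sw_mul_uHr //.
rewrite (sw_tensor E1); try by linearity.
rewrite big_allpairs_dep; apply: eq_bigr => p _.
by rewrite (sw_tensor E2); try by linearity.
Qed.

Lemma DeltaM_uH x y : uH y -> tensor_eq (D (x * y)) (tmul (D x) (D y)).
Proof.
move=> Ay; apply: tensor_eq_of_sw => phi bphi L1 L2.
by rewrite sw_mul_uHr // /tmul big_allpairs_dep.
Qed.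

Lemma uH_S x : uH x -> uH (S x).
Proof.
move=> Ax; case: (Ax) => [t Et tE]; exists [seq (S p.1, S p.2) | p <- t]; last first.
  by move=> p /mapP [q /tE [e1 e2] ->]; split; apply: even_S.
apply: tensor_eq_of_sw => phi bphi L1 L2; rewrite sw_antipode_uH //.
by rewrite (sw_tensor Et) ?big_map //; linearity.
Qed.


Definition V := odd_prim pr D.

Lemma sw_primitive (Z : lmodType k) v (F : H -> H -> Z) :
  tensor_eq (D v) [:: (v, 1); (1, v)] ->
  (forall w, linear (fun y => F y w)) -> (forall w, linear (F w)) -> sw v F = F v 1 + F 1 v.
Proof. by move=> e F1 F2; rewrite (sw_tensor e) // !big_cons big_nil addr0. Qed.

Lemma V0 : V 0.
Proof.
split; first exact: (linear_fun0 (pr_linear true)).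
move=> phi bphi; rewrite (Delta0 bphi) !big_cons big_nil /=.
by rewrite (bform0l bphi) (bform0r bphi) !addr0.
Qed.

Lemma V_linear a x y : V x -> V y -> V (a *: x + y).
Proof.
move=> [ox px] [oy py]; split; first by rewrite pr_linear ox oy.
apply: tensor_eq_of_sw => phi bphi L1 L2; rewrite sw_linear //.
rewrite !(sw_primitive px) // !(sw_primitive py) //.
rewrite !big_cons big_nil /= addr0 (L1 1) (L2 1).
by rewrite scalerDr !addrA; congr (_ + _); rewrite -!addrA; congr (_ + _); rewrite addrC.
Qed.

Lemma antipode1 : S 1 = 1.
Proof.
have := antipodeL 1; rewrite -/(sw 1 (fun a b => S a * b)).
by rewrite sw1 ?eps1 ?scale1r ?mulr1 //; linearity.
Qed.

Lemma act1 v : act v 1 = v.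
Proof. by rewrite actE sw1 ?antipode1 ?mul1r ?mulr1 //; linearity. Qed.

Lemma actM v a b : uH a -> uH b -> act v (a * b) = act (act v a) b.
Proof.
move=> Aa Ab; rewrite !actE sw_mul_uHr //; try by linearity.
transitivity (sw a (fun p q => sw b (fun r s => S r * (S p * v * q) * s))).
  apply: eq_sw_uH => //; try by linearity.
  move=> p q Ap _; apply: eq_sw_uH => //; try by linearity.
  by move=> r s Ar _; rewrite antipodeM_uH // !mulrA.
rewrite exchange_sw; apply: eq_sw => r s.
by rewrite (@sw_comp _ _ a _ (fun z => S r * z * s)) //; linearity.
Qed.

Lemma act_odd v a : pr true v = v -> uH a -> pr true (act v a) = act v a.
Proof.
move=> ov [t Et tE]; rewrite actE (sw_tensor Et); try by linearity.
rewrite (linear_fun_sum (pr_linear true)); apply: eq_big_seq => p /tE [e1 e2].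
have h1 : pr true (S p.1 * v) = S p.1 * v.
  by have := pr_homogeneous_mul false true (S p.1) v; rewrite (even_S e1) ov.
by have := pr_homogeneous_mul true false (S p.1 * v) p.2; rewrite h1 e2.
Qed.

Notation swk := (@sw k^o).

Lemma sw_act_primitive v a (phi : H -> H -> k) : V v -> uH a -> bilinear_form phi ->
  swk (act v a) phi =
  swk a (fun p q => swk p (fun e f => swk q (fun g h => phi (S e * v * g) (S f * h))) +
                    swk p (fun e f => swk q (fun g h => phi (S e * g) (S f * v * h)))).
Proof.
move=> [_ pv] Aa bphi; have L1 := bilinear_form_linearl bphi.
have L2 := bilinear_form_linearr bphi.
transitivity (swk a (fun p q => swk (S p * v * q) phi)).
  by rewrite actE (@sw_comp _ _ a (fun p q => S p * v * q) (fun z => swk z phi)) //; linearity.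
apply: eq_sw_uH => //; try by linearity.
move=> p q Ap Aq; rewrite sw_mul_uHr //; try by linearity.
rewrite (sw_mul_uHl _ (uH_S Ap)); try by linearity.
transitivity (swk (S p) (fun e1 f1 => swk q (fun g h => phi (e1 * v * g) (f1 * 1 * h)) +
                                   swk q (fun g h => phi (e1 * 1 * g) (f1 * v * h)))).
  by apply: eq_sw => e1 f1; rewrite sw_primitive //; linearity.
rewrite sw_antipode_uH //; try by linearity.
by rewrite -sw_split; apply: eq_sw => e f; rewrite !mulr1 -sw_split.
Qed.

Lemma act_primitive v a : V v -> uH a ->
  tensor_eq (D (act v a)) [:: (act v a, 1); (1, act v a)].
Proof.
move=> Vv Aa; apply: tensor_eq_of_sw => phi bphi L1 L2.
rewrite sw_act_primitive // sw_split !big_cons big_nil /= addr0; congr (_ + _).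
- rewrite (sw_swap_middle (K := fun e f g h => (phi (S e * v * g) (S f * h) : k^o)));
    try by linearity.
  transitivity (swk a (fun p q => eps q *: swk p (fun e f => phi (S e * v * f) 1))).
    apply: eq_sw => p q; rewrite -sw_scaler; apply: eq_sw => e f.
    by rewrite (@sw_antipodeL _ _ (fun z => (phi (S e * v * f) z : k^o))).
  rewrite (@sw_counitR _ a (fun z => swk z (fun e f => phi (S e * v * f) 1))); last by linearity.
  by rewrite actE (@sw_comp _ _ a (fun e f => S e * v * f) (fun z => (phi z 1 : k^o)));
    linearity.
- rewrite (sw_swap_middle (K := fun e f g h => (phi (S e * g) (S f * v * h) : k^o)));
    try by linearity.
  transitivity (swk a (fun p q => eps p *: swk q (fun g h => phi 1 (S g * v * h)))).
    apply: eq_sw => p q.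
    by rewrite (@sw_antipodeL _ _ (fun z => swk q (fun g h => phi z (S g * v * h))));
      linearity.
  rewrite (@sw_counitL _ a (fun z => swk z (fun g h => phi 1 (S g * v * h))));
    last by linearity.
  by rewrite actE (@sw_comp _ _ a (fun e f => S e * v * f) (fun z => (phi 1 z : k^o)));
    linearity.
Qed.

Lemma V_act v a : V v -> uH a -> V (act v a).
Proof. by move=> Vv Aa; split; [exact: act_odd Vv.1 Aa|exact: act_primitive]. Qed.

Lemma sw_mul (Z : lmodType k) x y (F : H -> H -> Z) :
  (forall w, linear (fun y => F y w)) -> (forall w, linear (F w)) ->
  sw (x * y) F = sw x (fun a b => sw y (fun c d => \sum_(ij <- parities)
     (-1) ^+ (ij.1 && ij.2) *: F (a * pr ij.2 c) (pr ij.1 b * d))).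
Proof. by move=> F1 F2; rewrite {1}/sw (tensor_eq_sum (DeltaM x y)) // sum_stmul. Qed.

(* The cross terms of [Delta (u * v)] are [u (x) v - v (x) u] (Koszul sign),
   and cancel against those of [Delta (v * u)]. *)
Lemma anticomm_primitive u v : V u -> V v -> primitive_on uH D (anticomm u v).
Proof.
move=> [ou pu] [ov pv].
have eu := odd_pr_false ou; have ev := odd_pr_false ov.
have pr_true1 : pr true 1 = 0 by exact: even_pr_true even1.
have Ew : even (anticomm u v).
  rewrite /even /anticomm (linear_funD (pr_linear false)); congr (_ + _).
    by have := pr_homogeneous_mul true true u v; rewrite ou ov.
  by have := pr_homogeneous_mul true true v u; rewrite ou ov.
have De : tensor_eq (D (anticomm u v)) [:: (anticomm u v, 1); (1, anticomm u v)].
  apply: tensor_eq_of_sw => phi bphi L1 L2.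
  rewrite /anticomm (linear_funD (sw_linear L1 L2)) !sw_mul //.
  rewrite !(sw_primitive pu) /=; try by linearity.
  rewrite !(sw_primitive pv) /=; try by linearity.
  rewrite !(sw_primitive pu) /=; try by linearity.
  rewrite !big_parities /= ou ov eu ev pr_false1 pr_true1 !mulr0 !mul0r !mulr1 !mul1r.
  rewrite !(bform0l bphi) !(bform0r bphi) !big_cons big_nil /=.
  by rewrite (linear_funD (L1 1)) (linear_funD (L2 1)) !scale_regular !expr0 !expr1; ring.
split => //; exists [:: (anticomm u v, 1); (1, anticomm u v)] => //.
by move=> p; rewrite !inE => /orP [] /eqP -> /=; split => //; exact: even1.
Qed.

Lemma sw_act_mul u v a :
  sw a (fun p q => act u p * act v q) = sw a (fun e q => S e * u * v * q).
Proof.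
transitivity (sw a (fun p q => sw p (fun e f => sw q (fun g h => S e * u * f * (S g * v * h))))).
  apply: eq_sw => p q; rewrite actE.
  rewrite -(@sw_comp _ _ p (fun e f => S e * u * f) (fun z => z * act v q)); last by linearity.
  apply: eq_sw => e f; rewrite actE.
  by rewrite -(@sw_comp _ _ q (fun g h => S g * v * h) (fun z => S e * u * f * z)); linearity.
rewrite sw_coassoc4; try by linearity.
apply: eq_sw => e q.
transitivity (sw q (fun m h => eps m *: (S e * u * 1 * v * h))).
  apply: eq_sw => m h.
  rewrite -(@sw_antipodeR _ _ (fun z => S e * u * z * v * h)); last by linearity.
  by apply: eq_sw => f g; rewrite !mulrA.
rewrite (@sw_counitL _ q (fun h => S e * u * 1 * v * h)); last by linearity.
by rewrite mulr1.
Qed.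

Lemma anticomm_act_equivariant u v a : uH a ->
  \sum_(p <- D a) anticomm (act u p.1) (act v p.2) =
  \sum_(p <- D a) S p.1 * anticomm u v * p.2.
Proof.
move=> Aa; change (sw a (fun p q => anticomm (act u p) (act v q)) =
  sw a (fun p q => S p * anticomm u v * q)).
rewrite /anticomm sw_split sw_act_mul.
rewrite (sw_cocomm_uH (F := fun p q => act v q * act u p)) //; try by linearity.
rewrite sw_act_mul -sw_split; apply: eq_sw => e q.
by rewrite mulrDr mulrDl !mulrA.
Qed.

(* [w := v v + v v] is primitive, so [S w = - w] and [v <| w = - w v + v w = 0]. *)
Lemma act_anticomm_self v : V v -> act v (anticomm v v) = 0.
Proof.
move=> Vv; have [_ pw] := anticomm_primitive Vv Vv; set w := anticomm v v in pw *.
have e1 : eps w *: (1 : H) = 0.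
  have := counitL w; rewrite -/(sw w (fun a b => eps a *: b)) sw_primitive //;
    try by linearity.
  by rewrite eps1 scale1r => /eqP; rewrite -subr_eq0 addrK => /eqP.
have Sw : S w = - w.
  have := antipodeL w; rewrite -/(sw w (fun a b => S a * b)) sw_primitive //;
    try by linearity.
  by rewrite e1 antipode1 mulr1 mul1r => /eqP; rewrite addr_eq0 => /eqP.
rewrite actE sw_primitive //; try by linearity.
rewrite Sw antipode1 mulr1 mul1r /w /anticomm mulNr mulrDl mulrDr !mulrA.
by rewrite addNr.
Qed.

Lemma cocomm_hopf_on_uH : cocomm_hopf_on uH D eps S.
Proof.
split; last by move=> x Ax; apply: cocomm_uH.
split; last split; [|exact: uH_S|split; [by move=> a x y _ _; apply: S_linear|split]].
- split; [|split; [|split; [|split; [|split]]]].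
  + split; first by split; [exact: uH0|move=> a x y; exact: uH_linear].
    by split; [exact: uH1|move=> x y; exact: uHM].
  + split; first by move=> x /uH_rep [t Et tA]; exists t.
    split; first by move=> a x y _ _; apply: Delta_linear.
    split; first by move=> a x y _ _; apply: eps_linear.
    split; first by move=> x _; apply: coassoc.
    by split => x _; [apply: counitL|apply: counitR].
  + by move=> x y _ Ay; apply: DeltaM_uH.
  + exact: Delta1.
  + by move=> x y _ _; apply: epsM.
  + exact: eps1.
- by move=> x _; apply: antipodeL.
- by move=> x _; apply: antipodeR.
Qed.

Lemma rmodule_on_V : rmodule_on uH V act.
Proof.
split; first by split; [exact: V0|move=> a x y; exact: V_linear].
split; first by move=> v a Vv Aa; apply: V_act.
split; first by move=> c u v a _ _ _; apply: act_linearl.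
split; first by move=> c v a b _ _ _; apply: act_linearr.
split; first by move=> v _; apply: act1.
by move=> v a b _ Aa Ab; apply: actM.
Qed.

Lemma dual_HC_pair_of_super_cocomm : dual_HC_pair uH D eps S V act (@anticomm k H).
Proof.
split; first exact: cocomm_hopf_on_uH.
split; first exact: rmodule_on_V.
split; first by move=> u v Vu Vv; apply: anticomm_primitive.
split; first by move=> c u v w _ _ _; apply: anticomm_linearl.
split; first by move=> c u v w _ _ _; rewrite !(anticommC w) anticomm_linearl.
split; first by move=> u v a _ _ Aa; apply: anticomm_act_equivariant.
by split => [u v _ _|v Vv]; [exact: anticommC|exact: act_anticomm_self].
Qed.

End SuperCocommHopf.

Section SuperHopfMorphism.
Variables (k : fieldType) (H K : algType k) (prH : bool -> H -> H) (prK : bool -> K -> K)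
  (DH : H -> seq (H * H)) (DK : K -> seq (K * K)) (eH : H -> k) (eK : K -> k)
  (SH : H -> H) (SK : K -> K) (f : H -> K).
Hypotheses (hK : super_cocomm_hopf prK DK eK SK)
  (hf : super_hopf_morph prH prK DH DK eH eK SH SK f).

Lemma f_linear : linear f. Proof. by case: hf => [[_ [fl _]] _] a x y; apply: fl. Qed.
Lemma f1 : f 1 = 1. Proof. by case: hf => [[_ [_ [f1 _]]] _]. Qed.
Lemma fM x y : f (x * y) = f x * f y.
Proof. by case: hf => [[_ [_ [_ [fm _]]]] _]; apply: fm. Qed.
Lemma f_Delta x : tensor_eq (DK (f x)) [seq (f p.1, f p.2) | p <- DH x].
Proof. by case: hf => [[_ [_ [_ [_ [fD _]]]]] _]; apply: fD. Qed.
Lemma f_pr i x : f (prH i x) = prK i (f x). Proof. by case: hf => _ fp; apply: fp. Qed.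
Lemma f_S x : f (SH x) = SK (f x).
Proof. by case: hf => [[_ [_ [_ [_ [_ [_ fS]]]]]] _]; apply: fS. Qed.

Lemma tensor_eq_map (s t : seq (H * H)) : tensor_eq s t ->
  tensor_eq [seq (f p.1, f p.2) | p <- s] [seq (f p.1, f p.2) | p <- t].
Proof.
move=> e phi [b1 b2]; rewrite !big_map /=.
by apply: (e (fun a b => phi (f a) (f b))); split => *; rewrite f_linear ?b1 ?b2.
Qed.

Lemma hopf_morph_on_even_part :
  hopf_morph_on (even_part_sub prH DH) (even_part_sub prK DK) DH DK eH eK SH SK f.
Proof.
case: hf => [[_ [fl [f1 [fm [fD [fe fS]]]]]] _].
split; last first.
  split; first by move=> a x y _ _; apply: fl.
  split; first by [].
  split; first by move=> x y _ _; apply: fm.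
  split; first by move=> x _; apply: fD.
  by split => x _; [apply: fe|apply: fS].
move=> x [t Et tE]; exists [seq (f p.1, f p.2) | p <- t].
  exact: tensor_eq_trans (fD x I) (tensor_eq_map Et).
by move=> p /mapP [q /tE [e1 e2] ->] /=; rewrite -!f_pr e1 e2.
Qed.

Lemma odd_prim_map v : odd_prim prH DH v -> odd_prim prK DK (f v).
Proof.
move=> [ov pv]; split; first by rewrite -f_pr ov.
by apply: tensor_eq_trans (f_Delta v) _; have := tensor_eq_map pv; rewrite /= f1.
Qed.

Lemma adj_act_map v a : f (adj_act DH SH v a) = adj_act DK SK (f v) (f a).
Proof.
rewrite /adj_act (linear_fun_sum f_linear).
rewrite (@tensor_eq_sum _ _ _ _ _ (f_Delta a) (fun x y => SK x * f v * y)); last 2 first.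
- by move=> w c x y; rewrite (S_linear hK) mulrDl mulrDl -!scalerAl.
- by move=> w c x y; rewrite mulrDr -scalerAr.
by rewrite big_map; apply: eq_bigr => p _; rewrite !fM f_S.
Qed.

Lemma dual_HC_morph_of_super_morph :
  dual_HC_morph (even_part_sub prH DH) (even_part_sub prK DK) DH DK eH eK SH SK
    (odd_prim prH DH) (odd_prim prK DK) (adj_act DH SH) (adj_act DK SK)
    (@anticomm k H) (@anticomm k K) f f.
Proof.
split; first exact: hopf_morph_on_even_part.
split; first by move=> v; apply: odd_prim_map.
split; first by move=> c u v _ _; apply: f_linear.
split; first by move=> v a _ _; apply: adj_act_map.
by move=> u v _ _; rewrite /anticomm (linear_funD f_linear) !fM.
Qed.

End SuperHopfMorphism.

Theorem proposition3p4 (k : fieldType) (char_ne2 : (2%:R : k) != 0) :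
  (forall (H : algType k) (pr : bool -> H -> H) (Delta : H -> seq (H * H))
          (eps : H -> k) (S : H -> H),
     super_cocomm_hopf pr Delta eps S ->
     dual_HC_pair (even_part_sub pr Delta) Delta eps S
                  (odd_prim pr Delta) (adj_act Delta S) (@anticomm k H)) /\
  (forall (H K : algType k) (prH : bool -> H -> H) (prK : bool -> K -> K)
          (DH : H -> seq (H * H)) (DK : K -> seq (K * K))
          (eH : H -> k) (eK : K -> k) (SH : H -> H) (SK : K -> K) (f : H -> K),
     super_cocomm_hopf prH DH eH SH ->
     super_cocomm_hopf prK DK eK SK ->
     super_hopf_morph prH prK DH DK eH eK SH SK f ->
     dual_HC_morph (even_part_sub prH DH) (even_part_sub prK DK) DH DK eH eK SH SK
                   (odd_prim prH DH) (odd_prim prK DK) (adj_act DH SH) (adj_act DK SK)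
                   (@anticomm k H) (@anticomm k K) f f).
Proof.
split=> [H pr Delta eps S hH | H K prH prK DH DK eH eK SH SK f _ hK hf].
  exact: dual_HC_pair_of_super_cocomm hH.
exact: dual_HC_morph_of_super_morph hK hf.
Qed.
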